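(* Let $Z,V,Y$ be random variables and $f:\mathbb{R}\times\mathcal{V}\to\mathbb{R}$ a measurable function such that: (i) $f(z,v)$ is non-increasing in $z$ for every $v$; (ii) $Z$ and $V$ are conditionally independent given $Y$; (iii) $\mathbb{E}(Z\mid Y)=\mathbb{E}(Z)$ almost surely. Assume $Z$, $f(Z,V)$, $Zf(Z,V)$ and $f(\mathbb{E}Z,V)$ are integrable (and $Zf(\mathbb{E}Z,V)$ integrable). Then $$\mathbb{E}[Z f(Z,V)]\le \mathbb{E}(Z)\,\mathbb{E}[f(Z,V)].$$ *)

From HB Require Import structures.
From mathcomp Require Import all_boot all_order all_algebra.
From mathcomp Require Import all_classical all_reals all_analysis.
Set Implicit Arguments. Unset Strict Implicit. Unset Printing Implicit Defensive.
Import Order.TTheory GRing.Theory Num.Theory.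
Local Open Scope classical_set_scope.
Local Open Scope ring_scope.

(* [g] is a version of the conditional expectation E[X | sigma(Y)]:
   g is sigma(Y)-measurable (g = h o Y with h measurable), integrable,
   and has the same integrals as X over every set of sigma(Y). *)
Definition cond_exp_version {d dY : measure_display} {T : measurableType d}
  {TY : measurableType dY} {R : realType} (P : probability T R)
  (Y : T -> TY) (X : T -> R) (g : T -> R) : Prop :=
  (exists h : TY -> R, measurable_fun setT h /\ g = h \o Y) /\
  P.-integrable setT (EFin \o g) /\
  forall B : set TY, measurable B ->
    (\int[P]_(x in Y @^-1` B) (X x)%:E = \int[P]_(x in Y @^-1` B) (g x)%:E)%E.

(* Z and V are conditionally independent given Y:
   P(Z in A, V in B | Y) = P(Z in A | Y) P(V in B | Y) a.s., for all
   measurable A, B. *)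
Definition cond_indep {d dV dY : measure_display} {T : measurableType d}
  {TV : measurableType dV} {TY : measurableType dY} {R : realType}
  (P : probability T R) (Z : T -> R) (V : T -> TV) (Y : T -> TY) : Prop :=
  forall (A : set R) (B : set TV), measurable A -> measurable B ->
  exists gA gB gAB : T -> R,
    [/\ cond_exp_version P Y (\1_(Z @^-1` A)) gA,
        cond_exp_version P Y (\1_(V @^-1` B)) gB,
        cond_exp_version P Y (\1_(Z @^-1` A `&` V @^-1` B)) gAB &
        {ae P, forall x, gAB x = gA x * gB x}].

From HB Require Import structures.
From mathcomp Require Import all_boot all_order all_algebra.
From mathcomp Require Import all_classical all_reals all_analysis.
From mathcomp Require Import measurable_realfun.
From mathcomp Require Import lra.
Import Order.TTheory GRing.Theory Num.Theory.
Import numFieldNormedType.Exports.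
Import HBSimple HBNNSimple.
Set Implicit Arguments. Unset Strict Implicit. Unset Printing Implicit Defensive.
Local Open Scope classical_set_scope.
Local Open Scope ring_scope.

(* Write m := E Z.  Monotonicity of f gives, pointwise,
   (Z - m) (f(Z,V) - f(m,V)) <= 0, i.e.
   Z f(Z,V) <= m f(Z,V) + Z f(m,V) - m f(m,V),
   so it suffices that E[Z k(V)] = m E[k(V)] for k := f(m, .).  For k = 1_B
   this is the computation
   E[Z 1_B(V)] = E[Z w(Y)] = E[E(Z|Y) w(Y)] = m E[w(Y)] = m P(V in B)
   with w(Y) = P(V in B | Y), where the first equality is conditional
   independence.  Identities E[a 1_A(U)] = E[b 1_A(U)] holding for all
   measurable A extend to E[a k(U)] = E[b k(U)] for all measurable k (simple
   functions, then dominated convergence, then positive and negative parts),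
   which turns the indicator case into the general one. *)

Section integral_lemmas.
Context d (T : measurableType d) (R : realType) (mu : {measure set T -> \bar R}).

Lemma measurable_of_integrable (c : T -> R) :
  mu.-integrable setT (EFin \o c) -> measurable_fun setT c.
Proof. by move=> /integrableP[/measurable_EFinP]. Qed.

Lemma ae_eq_integral_EFin (F1 F2 : T -> R) :
  measurable_fun setT F1 -> measurable_fun setT F2 ->
  {ae mu, forall x, F1 x = F2 x} ->
  (\int[mu]_x (F1 x)%:E = \int[mu]_x (F2 x)%:E)%E.
Proof.
move=> m1 m2 ae; apply: (ae_eq_integral (fun x => (F2 x)%:E)) => //.
- exact/measurable_EFinP.
- exact/measurable_EFinP.
- by apply: filterS ae => x /= -> _.
Qed.

Lemma integrable_mulr_bounded (u c : T -> R) :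
  measurable_fun setT c -> (forall x, `|c x| <= 1) ->
  mu.-integrable setT (EFin \o u) -> mu.-integrable setT (fun x => (u x * c x)%:E).
Proof.
move=> mc cb iu; apply: le_integrable (iu) => //.
  apply/(@measurable_EFinP _ _ _ _ (fun x => u x * c x)).
  by apply: measurable_funM => //; exact: measurable_of_integrable iu.
by move=> x _ /=; rewrite lee_fin normrM -[leRHS]mulr1 ler_wpM2l.
Qed.

Lemma integrable_mull_bounded (u c : T -> R) :
  measurable_fun setT c -> (forall x, `|c x| <= 1) ->
  mu.-integrable setT (EFin \o u) -> mu.-integrable setT (fun x => (c x * u x)%:E).
Proof.
move=> mc cb /(integrable_mulr_bounded mc cb).
by apply: eq_integrable => // x _; rewrite mulrC.
Qed.

Lemma integral_preimage_indic dS (S : measurableType dS) (U : T -> S)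
    (X : T -> R) (B : set S) :
  (\int[mu]_(x in U @^-1` B) (X x)%:E = \int[mu]_x (X x * \1_B (U x))%:E)%E.
Proof.
rewrite integral_mkcond; apply: eq_integral => x _; rewrite patchE indicE.
have [UB|UB] := boolP (U x \in B).
  by rewrite mem_set ?mulr1 //; exact/set_mem.
by rewrite memNset ?mulr0 //= -notin_setE.
Qed.

Lemma measure0_lt_integral_ge (D : set T) (f1 f2 : T -> R) :
  measurable D -> mu.-integrable D (EFin \o f1) -> mu.-integrable D (EFin \o f2) ->
  (forall x, D x -> f1 x < f2 x) ->
  (\int[mu]_(x in D) (f2 x)%:E <= \int[mu]_(x in D) (f1 x)%:E)%E -> mu D = 0.
Proof.
move=> mD i1 i2 lt12 le21.
pose F : T -> \bar R := fun x => ((f2 x)%:E - (f1 x)%:E)%E.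
have mF : measurable_fun D F.
  by apply: emeasurable_funB; [exact: measurable_int i2|exact: measurable_int i1].
have intF0 : (\int[mu]_(x in D) `|F x| = 0)%E.
  transitivity (\int[mu]_(x in D) F x)%E.
    apply: eq_integral => x /[!inE] Dx.
    by rewrite gee0_abs // subre_ge0 // lee_fin ltW // lt12.
  apply/eqP; rewrite eq_le; apply/andP; split.
    by rewrite integralB_EFin // sube_le0.
  by apply: integral_ge0 => x Dx; rewrite subre_ge0 // lee_fin ltW // lt12.
have [N [mN N0 sub]] := (ae_eq_integral_abs mu mD mF).1 intF0.
apply: (subset_measure0 mD mN _ N0) => x Dx; apply: sub => /= /(_ Dx).
rewrite /F -EFinB => /(congr1 fine) /= /eqP.
by rewrite subr_eq0 (gt_eqF (lt12 _ Dx)).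
Qed.

End integral_lemmas.

Lemma integrable_bounded d (T : measurableType d) (R : realType)
    (P : probability T R) (c : T -> R) :
  measurable_fun setT c -> (forall x, `|c x| <= 1) -> P.-integrable setT (EFin \o c).
Proof.
move=> mc cb.
have := integrable_mulr_bounded (u := cst 1) mc cb
  (finite_measure_integrable_cst P 1 measurableT).
by apply: eq_integrable => // x _ /=; rewrite mul1r.
Qed.

Lemma normr_indic_le1 (X : Type) (R : realType) (A : set X) (x : X) :
  `|\1_A x : R| <= 1.
Proof. by rewrite indicE; case: (_ \in _); rewrite ?normr1 ?normr0. Qed.

Lemma measurable_indic_comp d dS (T : measurableType d) (S : measurableType dS)
    (R : realType) (U : T -> S) (A : set S) :
  measurable_fun setT U -> measurable A ->
  measurable_fun setT (fun x => \1_A (U x) : R).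
Proof. by move=> mU mA; apply: measurableT_comp => //; exact: measurable_indic. Qed.

Lemma measurableT_preimage d dS (T : measurableType d) (S : measurableType dS)
    (U : T -> S) (B : set S) :
  measurable_fun setT U -> measurable B -> measurable (U @^-1` B).
Proof. by move=> mU mB; rewrite -[_ @^-1` _]setTI; exact: mU. Qed.

Lemma measurable_set_ltr dY (TY : measurableType dY) (R : realType) (u v : TY -> R) :
  measurable_fun setT u -> measurable_fun setT v -> measurable [set y | u y < v y].
Proof.
move=> mu mv; have := measurable_fun_ltr mu mv measurableT.
by move/(_ [set true] I); rewrite setTI.
Qed.

Definition clamp01 (R : realType) (r : R) := Num.min (Num.max r 0) 1.

Lemma normr_clamp01_le1 (R : realType) (r : R) : `|clamp01 r| <= 1.
Proof.
rewrite /clamp01 ger0_norm; first by rewrite ge_min lexx orbT.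
by rewrite le_min ler01 andbT le_max lexx orbT.
Qed.

Lemma clamp01_id (R : realType) (r : R) : 0 <= r <= 1 -> clamp01 r = r.
Proof. by case/andP=> r0 r1; rewrite /clamp01 (max_idPl r0) (min_idPl r1). Qed.

Lemma measurable_clamp01 dY (TY : measurableType dY) (R : realType) (h : TY -> R) :
  measurable_fun setT h -> measurable_fun setT (fun y => clamp01 (h y)).
Proof.
move=> mh; apply: (@measurable_minr _ _ _ _ (fun y => Num.max (h y) 0) (cst 1)) => //.
exact: (@measurable_maxr _ _ _ _ h (cst 0)).
Qed.

Lemma dominated_cvg_integral_mul_comp d dS (T : measurableType d)
    (S : measurableType dS) (R : realType) (mu : {measure set T -> \bar R})
    (U : T -> S) (w : S -> R) (s : nat -> {nnsfun S >-> R}) (c : T -> R) :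
  measurable_fun setT U -> measurable_fun setT w ->
  (forall n y, s n y <= w y) -> (forall y, (fun n => s n y) @ \oo --> w y) ->
  mu.-integrable setT (EFin \o c) ->
  mu.-integrable setT (fun x => (c x * w (U x))%:E) ->
  (fun n => \int[mu]_x (c x * s n (U x))%:E)%E @ \oo -->
    (\int[mu]_x (c x * w (U x))%:E)%E.
Proof.
move=> mU mw s_le s_cvg ic icw; have mc := measurable_of_integrable ic.
have mfn n : measurable_fun setT (fun x => (c x * s n (U x))%:E).
  apply/(@measurable_EFinP _ _ _ _ (fun x => c x * s n (U x))).
  by apply: measurable_funM => //; exact: measurableT_comp.
have mf : measurable_fun setT (fun x => (c x * w (U x))%:E).
  apply/(@measurable_EFinP _ _ _ _ (fun x => c x * w (U x))).
  by apply: measurable_funM => //; exact: measurableT_comp.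
have fcv : {ae mu, forall x, setT x ->
    (fun n => (c x * s n (U x))%:E) @ \oo --> (c x * w (U x))%:E}.
  apply: aeW => x _; apply: cvg_EFin; first exact: nearW.
  exact: cvgMl_tmp (s_cvg (U x)).
have fg : {ae mu, forall x n, setT x ->
    (`|(c x * s n (U x))%:E| <= (abse \o (fun x => (c x * w (U x))%:E)) x)%E}.
  apply: aeW => x n _; rewrite /= lee_fin !normrM ler_wpM2l //.
  have s0 : 0 <= s n (U x) by exact: fun_ge0.
  by rewrite !ger0_norm ?s_le // (le_trans s0 (s_le n (U x))).
by have [] := dominated_convergence measurableT mfn mf fcv (integrable_abse icw) fg.
Qed.

Section extend_indicator_identity.
Context d dS (T : measurableType d) (S : measurableType dS) (R : realType).
Variables (mu : {measure set T -> \bar R}) (U : T -> S) (a b : T -> R).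
Hypothesis mU : measurable_fun setT U.
Hypotheses (ia : mu.-integrable setT (EFin \o a)) (ib : mu.-integrable setT (EFin \o b)).
Hypothesis eq_ab_indic : forall A, measurable A ->
  (\int[mu]_x (a x * \1_A (U x))%:E = \int[mu]_x (b x * \1_A (U x))%:E)%E.

Lemma eq_integral_mul_sfun (s : {sfun S >-> R}) :
  (\int[mu]_x (a x * s (U x))%:E = \int[mu]_x (b x * s (U x))%:E)%E.
Proof.
have sum_indic (c : T -> R) : (fun x => (c x * s (U x))%:E) = (fun x =>
    \sum_(y <- finmap.enum_fset (fset_set (range s)))
      (y%:E * (c x * \1_(s @^-1` [set y]) (U x))%:E))%E.
  apply/funext => x; rewrite fimfunE fsbig_finite ?fimfunP // mulr_sumr.
  rewrite (eq_bigr (fun y => (y * (c x * \1_(s @^-1` [set y]) (U x)))%:E)) //.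
  by rewrite sumEFin; congr EFin; apply: eq_bigr => y _; rewrite mulrCA.
have integral_sum_indic (c : T -> R) : mu.-integrable setT (EFin \o c) ->
  (\int[mu]_x (c x * s (U x))%:E = \sum_(y <- finmap.enum_fset (fset_set (range s)))
      (y%:E * \int[mu]_x (c x * \1_(s @^-1` [set y]) (U x))%:E))%E.
  move=> ic.
  have ms y : measurable (s @^-1` [set y]).
    exact: (measurable_funPTI s (measurable_set1 y)).
  have iy y : mu.-integrable setT (fun x => (c x * \1_(s @^-1` [set y]) (U x))%:E).
    apply: integrable_mulr_bounded ic; last by move=> x; exact: normr_indic_le1.
    exact: measurable_indic_comp.
  rewrite sum_indic integral_sum //; last by move=> y; exact: integrableZl.
  by apply: eq_bigr => y _; rewrite integralZl.
rewrite (integral_sum_indic _ ia) (integral_sum_indic _ ib).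
by apply: eq_bigr => y _; rewrite eq_ab_indic.
Qed.

Lemma eq_integral_mul_ge0 (w : S -> R) :
  measurable_fun setT w -> (forall y, 0 <= w y) ->
  mu.-integrable setT (fun x => (a x * w (U x))%:E) ->
  mu.-integrable setT (fun x => (b x * w (U x))%:E) ->
  (\int[mu]_x (a x * w (U x))%:E = \int[mu]_x (b x * w (U x))%:E)%E.
Proof.
move=> mw w0 iaw ibw.
have mwE : measurable_fun setT (EFin \o w) by exact/measurable_EFinP.
have w0E y : setT y -> (0 <= (EFin \o w) y)%E by move=> _; rewrite lee_fin.
pose s := nnsfun_approx measurableT mwE.
have s_le n y : s n y <= w y by rewrite /s nnsfun_approxE -lee_fin; exact: le_approx.
have s_cvg y : (fun n => s n y) @ \oo --> w y.
  rewrite (_ : (fun n => s n y) = (approx setT (EFin \o w))^~ y); last first.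
    by apply/funext => n; rewrite /s nnsfun_approxE.
  exact: (cvg_approx w0E (x := y) I (ltry _)).
have cva := dominated_cvg_integral_mul_comp mU mw s_le s_cvg ia iaw.
have cvb := dominated_cvg_integral_mul_comp mU mw s_le s_cvg ib ibw.
have eqs : (fun n => \int[mu]_x (a x * s n (U x))%:E)%E =
           (fun n => \int[mu]_x (b x * s n (U x))%:E)%E.
  by apply/funext => n; exact: eq_integral_mul_sfun.
rewrite eqs in cva.
exact: (cvg_unique (@ereal_hausdorff R) cva cvb).
Qed.

Lemma eq_integral_mul (w : S -> R) :
  measurable_fun setT w ->
  mu.-integrable setT (fun x => (a x * w (U x))%:E) ->
  mu.-integrable setT (fun x => (b x * w (U x))%:E) ->
  (\int[mu]_x (a x * w (U x))%:E = \int[mu]_x (b x * w (U x))%:E)%E.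
Proof.
move=> mw iaw ibw.
pose wp y := Num.max (w y) 0; pose wn y := Num.max (- w y) 0.
have mwp : measurable_fun setT wp by exact: (@measurable_maxr _ _ _ _ w (cst 0)).
have mwn : measurable_fun setT wn.
  apply: (@measurable_maxr _ _ _ _ (fun y => - w y) (cst 0)) => //.
  exact: measurableT_comp.
have wE y : w y = wp y - wn y.
  rewrite /wp /wn; have [w0|w0] := leP 0 (w y).
    by rewrite (max_idPr _) ?subr0 // oppr_le0.
  by rewrite (max_idPl _) ?sub0r ?opprK // oppr_ge0 ltW.
have wp0 y : 0 <= wp y by rewrite /wp le_max lexx orbT.
have wn0 y : 0 <= wn y by rewrite /wn le_max lexx orbT.
have wpb y : `|wp y| <= `|w y|.
  by rewrite /wp; have [w0|w0] := leP 0 (w y); rewrite ?normr0.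
have wnb y : `|wn y| <= `|w y|.
  rewrite /wn; have [w0|w0] := leP 0 (w y).
    by rewrite (max_idPr _) ?normr0 // oppr_le0.
  by rewrite (max_idPl _) ?normrN // oppr_ge0 ltW.
have iw (c : T -> R) (v : S -> R) : measurable_fun setT v ->
    (forall y, `|v y| <= `|w y|) -> mu.-integrable setT (EFin \o c) ->
    mu.-integrable setT (fun x => (c x * w (U x))%:E) ->
    mu.-integrable setT (fun x => (c x * v (U x))%:E).
  move=> mv vb ic icw; apply: le_integrable (icw) => //.
    apply/(@measurable_EFinP _ _ _ _ (fun x => c x * v (U x))).
    apply: measurable_funM; first exact: measurable_of_integrable ic.
    exact: measurableT_comp.
  by move=> x _ /=; rewrite lee_fin !normrM ler_wpM2l.
have splitE (c : T -> R) : mu.-integrable setT (EFin \o c) ->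
    mu.-integrable setT (fun x => (c x * w (U x))%:E) ->
    (\int[mu]_x (c x * w (U x))%:E = \int[mu]_x (c x * wp (U x))%:E
       - \int[mu]_x (c x * wn (U x))%:E)%E.
  move=> ic icw.
  rewrite -(integralB_EFin measurableT (iw _ _ mwp wpb ic icw) (iw _ _ mwn wnb ic icw)).
  by apply: eq_integral => x _; rewrite -EFinB -mulrBr -wE.
rewrite (splitE _ ia iaw) (splitE _ ib ibw).
rewrite (eq_integral_mul_ge0 mwp wp0 (iw _ _ mwp wpb ia iaw) (iw _ _ mwp wpb ib ibw)).
by rewrite (eq_integral_mul_ge0 mwn wn0 (iw _ _ mwn wnb ia iaw) (iw _ _ mwn wnb ib ibw)).
Qed.

End extend_indicator_identity.

Section cond_exp_version_lemmas.
Context d dY (T : measurableType d) (TY : measurableType dY) (R : realType).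
Variables (P : probability T R) (Y : T -> TY).
Hypothesis mY : measurable_fun setT Y.

Lemma cond_exp_version_integral (X g : T -> R) :
  cond_exp_version P Y X g -> (\int[P]_x (X x)%:E = \int[P]_x (g x)%:E)%E.
Proof. by move=> [_ [_ e]]; have := e _ measurableT; rewrite preimage_setT. Qed.

Lemma cond_exp_version_indic (X g : T -> R) :
  cond_exp_version P Y X g -> forall C, measurable C ->
  (\int[P]_x (X x * \1_C (Y x))%:E = \int[P]_x (g x * \1_C (Y x))%:E)%E.
Proof. by move=> [_ [_ e]] C mC; rewrite -!integral_preimage_indic e. Qed.

Lemma cond_exp_version_lt_null (X : T -> R) (u v : TY -> R) :
  measurable_fun setT u -> measurable_fun setT v ->
  cond_exp_version P Y X (u \o Y) -> cond_exp_version P Y X (v \o Y) ->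
  P (Y @^-1` [set y | u y < v y]) = 0.
Proof.
move=> mu mv [_ [iu eu]] [_ [iv ev]].
have mB := measurable_set_ltr mu mv; have mD := measurableT_preimage mY mB.
apply: (measure0_lt_integral_ge mD (f1 := u \o Y) (f2 := v \o Y)) => //.
- exact: integrableS iu.
- exact: integrableS iv.
- by rewrite -(ev _ mB) -(eu _ mB).
Qed.

Lemma cond_exp_version_ae_unique (X g1 g2 : T -> R) :
  cond_exp_version P Y X g1 -> cond_exp_version P Y X g2 ->
  {ae P, forall x, g1 x = g2 x}.
Proof.
move=> c1 c2; have [[h1 [mh1 g1E]] _] := c1; have [[h2 [mh2 g2E]] _] := c2.
subst g1 g2.
have m12 := measurableT_preimage mY (measurable_set_ltr mh1 mh2).
have m21 := measurableT_preimage mY (measurable_set_ltr mh2 mh1).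
have N12 := cond_exp_version_lt_null mh1 mh2 c1 c2.
have N21 := cond_exp_version_lt_null mh2 mh1 c2 c1.
exists (Y @^-1` [set y | h1 y < h2 y] `|` Y @^-1` [set y | h2 y < h1 y]).
split; [exact: measurableU|exact: null_set_setU|].
by move=> x /= neq; case: ltgtP neq => // _ _; [left|right].
Qed.

Lemma cond_exp_version_indic_ae01 (A : set T) (g : T -> R) :
  measurable A -> cond_exp_version P Y (\1_A) g -> {ae P, forall x, 0 <= g x <= 1}.
Proof.
move=> mA [[h [mh ->]] [ih eh]].
have mc (c : R) : measurable_fun setT (fun _ : TY => c) by exact: measurable_cst.
have iA (D : set T) : measurable D -> P.-integrable D (EFin \o (\1_A : T -> R)).
  by move=> mD; apply: (integrableS measurableT) => //; exact: integrable_indic.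
have mN0 := measurable_set_ltr mh (mc 0).
have mN1 := measurable_set_ltr (mc 1) mh.
have N0 : P (Y @^-1` [set y | h y < 0]) = 0.
  have mD := measurableT_preimage mY mN0.
  apply: (measure0_lt_integral_ge mD (f1 := h \o Y) (f2 := cst 0)) => //.
  - exact: integrableS ih.
  - exact: finite_measure_integrable_cst.
  - rewrite -(eh _ mN0) integral0; apply: integral_ge0 => x _.
    by rewrite lee_fin indicE.
have N1 : P (Y @^-1` [set y | 1 < h y]) = 0.
  have mD := measurableT_preimage mY mN1.
  apply: (measure0_lt_integral_ge mD (f1 := cst 1) (f2 := h \o Y)) => //.
  - exact: finite_measure_integrable_cst.
  - exact: integrableS ih.
  - rewrite -(eh _ mN1); apply: le_integral => //.
    + exact: iA.
    + exact: finite_measure_integrable_cst.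
    + by move=> x _; rewrite lee_fin indicE /=; case: (_ \in _).
have mD0 := measurableT_preimage mY mN0; have mD1 := measurableT_preimage mY mN1.
exists (Y @^-1` [set y | h y < 0] `|` Y @^-1` [set y | 1 < h y]).
split; [exact: measurableU|exact: null_set_setU|].
move=> x /= h01; have [lt0|ge0] := ltP (h (Y x)) 0; first by left.
by right; rewrite /= ltNge; apply/negP => le1; apply: h01; rewrite ge0 le1.
Qed.

End cond_exp_version_lemmas.

Section cond_indep_lemmas.
Context d dV dY (T : measurableType d) (TV : measurableType dV)
  (TY : measurableType dY) (R : realType).
Variables (P : probability T R) (Z : T -> R) (V : T -> TV) (Y : T -> TY).
Hypotheses (mZ : measurable_fun setT Z) (mV : measurable_fun setT V)
  (mY : measurable_fun setT Y).
Hypothesis hCI : cond_indep P Z V Y.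

(* [w \o Y] is a version of P(V in B | Y), clamped to [0, 1] so that it is
   bounded everywhere, not only almost surely. *)
Lemma cond_indep_cond_prob (B : set TV) : measurable B ->
  exists w : TY -> R, [/\ measurable_fun setT w, forall y, `|w y| <= 1,
    (\int[P]_x (\1_B (V x))%:E = \int[P]_x (w (Y x))%:E)%E &
    forall A, measurable A ->
      (\int[P]_x (\1_B (V x) * \1_A (Z x))%:E =
       \int[P]_x (w (Y x) * \1_A (Z x))%:E)%E].
Proof.
move=> mB; have [_ [gB [_ [_ cB _ _]]]] := hCI measurableT mB.
have [[h [mh gBE]] [igB _]] := cB.
pose w y := clamp01 (h y).
have mw : measurable_fun setT w := measurable_clamp01 mh.
have mwY : measurable_fun setT (w \o Y) := measurableT_comp mw mY.
have wb y : `|w y| <= 1 := normr_clamp01_le1 _.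
have mVB := measurableT_preimage mV mB.
have gBw : {ae P, forall x, gB x = w (Y x)}.
  apply: filterS (cond_exp_version_indic_ae01 mY mVB cB) => x.
  by rewrite gBE => /clamp01_id.
have mgB := measurable_of_integrable igB.
exists w; split => //.
  by rewrite (cond_exp_version_integral cB); exact: ae_eq_integral_EFin gBw.
move=> A mA; have [gA [gB' [gAB [cA cB' cAB gABE]]]] := hCI mA mB.
have mgA := measurable_of_integrable (proj1 (proj2 cA)).
have mgB' := measurable_of_integrable (proj1 (proj2 cB')).
have mgAB := measurable_of_integrable (proj1 (proj2 cAB)).
have gB'w : {ae P, forall x, gB' x = w (Y x)}.
  apply: filterS2 (cond_exp_version_ae_unique mY cB' cB) gBw => x -> //.
transitivity (\int[P]_x (\1_(Z @^-1` A `&` V @^-1` B) x)%:E)%E.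
  by apply: eq_integral => x _; rewrite indicI /= mulrC.
rewrite (cond_exp_version_integral cAB).
rewrite (ae_eq_integral_EFin mgAB (measurable_funM mgA mgB') gABE).
rewrite (ae_eq_integral_EFin (measurable_funM mgA mgB') (measurable_funM mgA mwY)
  (F2 := fun x => gA x * w (Y x))); last by apply: filterS gB'w => x /= ->.
have iA : P.-integrable setT (EFin \o (fun x => \1_A (Z x) : R)).
  by apply: integrable_bounded; [exact: measurable_indic_comp|move=> x; exact: normr_indic_le1].
have wYb x : `|(w \o Y) x| <= 1 := wb (Y x).
rewrite -(eq_integral_mul mY iA (proj1 (proj2 cA)) (cond_exp_version_indic cA) mw
  (integrable_mulr_bounded mwY wYb iA)
  (integrable_mulr_bounded mwY wYb (proj1 (proj2 cA)))).
by apply: eq_integral => x _; rewrite mulrC.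
Qed.

Variables (m : R) (g : T -> R).
Hypotheses (gCE : cond_exp_version P Y Z g) (gm : {ae P, forall x, g x = m}).
Hypothesis iZ : P.-integrable setT (EFin \o Z).

Lemma integral_mul_indic_cond_mean (B : set TV) : measurable B ->
  (\int[P]_x (Z x * \1_B (V x))%:E = \int[P]_x (m * \1_B (V x))%:E)%E.
Proof.
move=> mB; have [w [mw wb wE wZ]] := cond_indep_cond_prob mB.
have mwY : measurable_fun setT (w \o Y) := measurableT_comp mw mY.
have wYb x : `|(w \o Y) x| <= 1 := wb (Y x).
have mBV : measurable_fun setT (fun x => \1_B (V x) : R) := measurable_indic_comp mV mB.
have iB : P.-integrable setT (EFin \o (fun x => \1_B (V x) : R)).
  by apply: integrable_bounded => // x; exact: normr_indic_le1.
have iw : P.-integrable setT (EFin \o (w \o Y)) := integrable_bounded P mwY wYb.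
have ig := proj1 (proj2 gCE).
have mid : measurable_fun setT (fun r : R => r) by exact: measurable_id.
have stepZ := eq_integral_mul mZ iB iw wZ mid
  (integrable_mull_bounded mBV (fun x => normr_indic_le1 _ _ _) iZ)
  (integrable_mull_bounded mwY wYb iZ).
have stepY := eq_integral_mul mY iZ ig (cond_exp_version_indic gCE) mw
  (integrable_mulr_bounded mwY wYb iZ) (integrable_mulr_bounded mwY wYb ig).
transitivity (\int[P]_x (\1_B (V x) * Z x)%:E)%E.
  by apply: eq_integral => x _; rewrite mulrC.
rewrite stepZ.
transitivity (\int[P]_x (Z x * w (Y x))%:E)%E.
  by apply: eq_integral => x _; rewrite mulrC.
rewrite stepY (ae_eq_integral_EFin (measurable_funM (measurable_of_integrable ig) mwY)
  (measurable_funM (measurable_cst m) mwY) (F2 := fun x => m * w (Y x))); last first.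
  by apply: filterS gm => x /= ->.
transitivity (m%:E * \int[P]_x (w (Y x))%:E)%E.
  by rewrite -(integralZl measurableT iw); apply: eq_integral => x _; rewrite EFinM.
rewrite -wE -(integralZl measurableT iB).
by apply: eq_integral => x _; rewrite EFinM.
Qed.

Lemma integral_mul_comp_cond_mean (k : TV -> R) : measurable_fun setT k ->
  P.-integrable setT (fun x => (Z x * k (V x))%:E) ->
  P.-integrable setT (fun x => (m * k (V x))%:E) ->
  (\int[P]_x (Z x * k (V x))%:E = \int[P]_x (m * k (V x))%:E)%E.
Proof.
move=> mk iZk imk.
have im : P.-integrable setT (EFin \o (fun=> m)) by exact: finite_measure_integrable_cst.
exact: (eq_integral_mul mV iZ im integral_mul_indic_cond_mean mk iZk imk).
Qed.

End cond_indep_lemmas.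

Lemma mul_noninc_le (R : realFieldType) (F : R -> R) (m z : R) :
  {homo F : z1 z2 /~ z1 <= z2} -> z * F z <= m * F z + (z * F m - m * F m).
Proof.
move=> F_noninc; have [mz|zm] := leP m z.
  by have := F_noninc _ _ mz; nra.
by have := F_noninc _ _ (ltW zm); nra.
Qed.

Theorem mainTheorem7 (d dV dY : measure_display) (T : measurableType d)
  (TV : measurableType dV) (TY : measurableType dY) (R : realType)
  (P : probability T R) (Z : T -> R) (V : T -> TV) (Y : T -> TY)
  (f : R -> TV -> R)
  (mZ : measurable_fun setT Z) (mV : measurable_fun setT V)
  (mY : measurable_fun setT Y)
  (mf : measurable_fun setT (fun p : R * TV => f p.1 p.2))
  (f_noninc : forall (v : TV) (z1 z2 : R), z1 <= z2 -> f z2 v <= f z1 v)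
  (hCI : cond_indep P Z V Y)
  (hCE : exists g : T -> R, cond_exp_version P Y Z g /\
          {ae P, forall x, g x = fine (\int[P]_y (Z y)%:E)%E})
  (iZ : P.-integrable setT (EFin \o Z))
  (ifZV : P.-integrable setT (fun x => (f (Z x) (V x))%:E))
  (iZfZV : P.-integrable setT (fun x => (Z x * f (Z x) (V x))%:E))
  (ifEV : P.-integrable setT
            (fun x => (f (fine (\int[P]_y (Z y)%:E)%E) (V x))%:E))
  (iZfEV : P.-integrable setT
            (fun x => (Z x * f (fine (\int[P]_y (Z y)%:E)%E) (V x))%:E)) :
  (\int[P]_x (Z x * f (Z x) (V x))%:E
     <= (\int[P]_x (Z x)%:E) * (\int[P]_x (f (Z x) (V x))%:E))%E.
Proof.
have [g [gCE gm]] := hCE; set m := fine _ in gm ifEV iZfEV *.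
have EZ : (\int[P]_y (Z y)%:E)%E = m%:E by rewrite /m fineK //; exact: integrable_fin_num.
have iMf (F : T -> R) : P.-integrable setT (EFin \o F) ->
    P.-integrable setT (fun x => (m * F x)%:E).
  by move=> iF; apply: eq_integrable (integrableZl measurableT m iF) => // x _; rewrite EFinM.
have imfm := iMf _ ifEV; have imfZ := iMf _ ifZV.
have Zfm_mean := integral_mul_comp_cond_mean mZ mV mY hCI gCE gm iZ
  (measurable_fun_pair2 m mf) iZfEV imfm.
rewrite EZ -(integralZl measurableT ifZV).
have iB := integrableB measurableT iZfEV imfm.
apply: (@le_trans _ _ (\int[P]_x ((m * f (Z x) (V x))%:E +
    ((Z x * f m (V x))%:E - (m * f m (V x))%:E)))%E).
  apply: le_integral => //; first exact: integrableD.
  move=> x _; rewrite -EFinB -EFinD lee_fin.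
  by apply: (mul_noninc_le (F := f^~ (V x))) => ? ?; exact: f_noninc.
rewrite integralD // integralB_EFin // Zfm_mean subee ?adde0; last exact: integrable_fin_num.
by rewrite le_eqVlt; apply/orP; left; apply/eqP/eq_integral => x _; rewrite EFinM.
Qed.
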